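(* Let $a,b>0$ with $a\ne b$, and $\nu\in(0,1)$ with $\nu\ne\frac12$. Let $r=\min\{\nu,1-\nu\}$, $R=\max\{\nu,1-\nu\}$ and $$E_\nu(a,b):=\frac{1}{\log b-\log a}\left(\frac{a^{1-\nu}b^\nu-a}{\nu}+\frac{b-a^{1-\nu}b^\nu}{1-\nu}-\frac{4\big(\sqrt{ab}-a^{1-\nu}b^\nu\big)}{1-2\nu}\right).$$ Then $$r\,E_\nu(a,b)\le L_\nu(a,b)-a^{1-\nu}b^\nu\le R\,E_\nu(a,b).$$
   Context: For $a,b>0$, $a\neq b$ and $\nu\in(0,1)$, the weighted logarithmic mean is $$L_\nu(a,b):=\frac{1}{\log a-\log b}\left\{\frac{1-\nu}{\nu}\big(a-a^{1-\nu}b^\nu\big)+\frac{\nu}{1-\nu}\big(a^{1-\nu}b^\nu-b\big)\right\}.$$ *)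

From Stdlib Require Import Reals.
Open Scope R_scope.

Definition wgm (nu a b : R) : R := Rpower a (1 - nu) * Rpower b nu.

Definition L_nu (nu a b : R) : R :=
  / (ln a - ln b) *
  ((1 - nu) / nu * (a - wgm nu a b) + nu / (1 - nu) * (wgm nu a b - b)).

Definition E_nu (nu a b : R) : R :=
  / (ln b - ln a) *
  ((wgm nu a b - a) / nu + (b - wgm nu a b) / (1 - nu)
   - 4 * (sqrt (a * b) - wgm nu a b) / (1 - 2 * nu)).

(** Writing [a = exp x], [b = exp y] and [m = (1 - nu) x + nu y], both means are
    combinations of divided differences [D p q = (exp q - exp p) / (q - p)]:
    [L_nu = (1 - nu) D x m + nu D m y] and [E_nu = D x m + D m y - 2 D m ((x + y) / 2)].
    Both means are invariant under [(nu, a, b) |-> (1 - nu, b, a)], so let [nu < 1/2].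
    The lower bound follows from the Hermite-Hadamard inequality
    [exp ((p + q) / 2) <= D p q] and convexity of [exp]; the upper bound is
    convexity of [t |-> D p (p + t)] along the chord from [0] to [y - m]. *)

From Stdlib Require Import Reals Lra Psatz.
From Coquelicot Require Import Coquelicot.
Open Scope R_scope.

Lemma mul_nonneg_of_derive_nonneg (f f' : R -> R) :
  f 0 = 0 -> (forall x, is_derive f x (f' x)) -> (forall x, 0 <= f' x) ->
  forall s, 0 <= s * f s.
Proof.
  intros f0 Hder Hpos s.
  assert (pr : derivable f).
  { intro x. exists (f' x). apply is_derive_Reals, Hder. }
  assert (Hincr : increasing f).
  { apply (nonneg_derivative_1 f pr). intro x.
    replace (derive_pt f x (pr x)) with (f' x); [apply Hpos |].
    symmetry. apply derive_pt_eq_0, is_derive_Reals, Hder. }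
  destruct (Rle_dec 0 s).
  - assert (0 <= f s) by (rewrite <- f0; apply Hincr; lra). nra.
  - assert (f s <= 0) by (rewrite <- f0; apply Hincr; lra). nra.
Qed.

Lemma exp_convex (l x y : R) : 0 <= l <= 1 ->
  exp (l * x + (1 - l) * y) <= l * exp x + (1 - l) * exp y.
Proof.
  intros Hl. set (m := l * x + (1 - l) * y).
  assert (Htan : forall z, exp m * (1 + (z - m)) <= exp z).
  { intro z. replace (exp z) with (exp m * exp (z - m))
      by (rewrite <- exp_plus; f_equal; ring).
    apply Rmult_le_compat_l; [left; apply exp_pos | apply exp_ineq1_le]. }
  pose proof (Htan x). pose proof (Htan y).
  assert (l * (exp m * (1 + (x - m))) + (1 - l) * (exp m * (1 + (y - m))) = exp m)
    by (unfold m; ring).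
  nra.
Qed.

Lemma sinh_div_id_ge1 (u : R) : u <> 0 -> 1 <= (exp u - exp (- u)) / (2 * u).
Proof.
  intros Hu.
  assert (Hsgn : 0 <= u * (exp u - exp (- u) - 2 * u)).
  { apply (mul_nonneg_of_derive_nonneg (fun u => exp u - exp (- u) - 2 * u)
             (fun u => exp u + exp (- u) - 2)).
    - rewrite Ropp_0, exp_0. ring.
    - intro x. auto_derive; auto. ring.
    - intro x. rewrite exp_Ropp. pose proof (exp_pos x).
      replace (exp x + / exp x - 2) with ((exp x - 1) ^ 2 / exp x) by (field; lra).
      apply Rdiv_le_0_compat; [apply pow2_ge_0 | lra]. }
  assert (Hdiff : (exp u - exp (- u)) / (2 * u) - 1
                  = u * (exp u - exp (- u) - 2 * u) / (2 * (u * u))) by (field; auto).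
  assert (0 <= u * (exp u - exp (- u) - 2 * u) / (2 * (u * u)))
    by (apply Rdiv_le_0_compat; nra).
  lra.
Qed.

Definition exp_divdiff (p q : R) : R := (exp q - exp p) / (q - p).

Lemma exp_mid_le_divdiff (p q : R) : p <> q -> exp ((p + q) / 2) <= exp_divdiff p q.
Proof.
  intros Hpq. set (m := (p + q) / 2). set (u := (q - p) / 2).
  assert (Hu : u <> 0) by (unfold u; lra).
  assert (Hdd : exp_divdiff p q = exp m * ((exp u - exp (- u)) / (2 * u))).
  { unfold exp_divdiff.
    replace q with (m + u) at 1 by (unfold m, u; field).
    replace p with (m + - u) at 1 by (unfold m, u; field).
    rewrite !exp_plus. unfold u. field. lra. }
  rewrite Hdd. pose proof (sinh_div_id_ge1 u Hu). pose proof (exp_pos m). nra.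
Qed.

Lemma exp_divdiff_chord (c p t : R) : 0 < c < 1 -> t <> 0 ->
  exp_divdiff p (p + c * t) <= c * exp_divdiff p (p + t) + (1 - c) * exp p.
Proof.
  intros Hc Ht.
  assert (Hsgn : 0 <= t * ((1 - c) * t + c * (exp t - 1) - (exp (c * t) - 1) / c)).
  { apply (mul_nonneg_of_derive_nonneg
             (fun t => (1 - c) * t + c * (exp t - 1) - (exp (c * t) - 1) / c)
             (fun t => (1 - c) + c * exp t - exp (c * t))).
    - rewrite !Rmult_0_r, exp_0. field; lra.
    - intro x. auto_derive; auto. field; lra.
    - intro x. pose proof (exp_convex c x 0 ltac:(lra)) as Hcv.
      rewrite exp_0, Rmult_0_r, Rplus_0_r in Hcv. lra. }
  assert (Hdiff : c * exp_divdiff p (p + t) + (1 - c) * exp p - exp_divdiff p (p + c * t)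
    = exp p * (t * ((1 - c) * t + c * (exp t - 1) - (exp (c * t) - 1) / c)) / (t * t)).
  { unfold exp_divdiff. rewrite !exp_plus. field. repeat split; nra. }
  assert (0 <= exp p * (t * ((1 - c) * t + c * (exp t - 1) - (exp (c * t) - 1) / c))
               / (t * t)).
  { apply Rdiv_le_0_compat; [| nra]. pose proof (exp_pos p). nra. }
  lra.
Qed.

Lemma wgm_exp (nu x y : R) : wgm nu (exp x) (exp y) = exp ((1 - nu) * x + nu * y).
Proof. unfold wgm, Rpower. rewrite !ln_exp, exp_plus. reflexivity. Qed.

Lemma sqrt_exp_mul (x y : R) : sqrt (exp x * exp y) = exp ((x + y) / 2).
Proof.
  rewrite <- exp_plus. replace (x + y) with ((x + y) / 2 + (x + y) / 2) at 1 by field.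
  rewrite exp_plus. apply sqrt_square. left; apply exp_pos.
Qed.

Section MeansOfExp.

Variables nu x y : R.
Hypothesis Hxy : x <> y.
Hypothesis Hnu : 0 < nu < 1.

Let m := (1 - nu) * x + nu * y.

Lemma L_nu_exp :
  L_nu nu (exp x) (exp y) = (1 - nu) * exp_divdiff x m + nu * exp_divdiff m y.
Proof.
  unfold L_nu, exp_divdiff. rewrite wgm_exp, !ln_exp. fold m.
  replace (m - x) with (nu * (y - x)) by (unfold m; ring).
  replace (y - m) with ((1 - nu) * (y - x)) by (unfold m; ring).
  field. repeat split; lra.
Qed.

Lemma E_nu_exp : nu <> 1 / 2 ->
  E_nu nu (exp x) (exp y)
  = exp_divdiff x m + exp_divdiff m y - 2 * exp_divdiff m ((x + y) / 2).
Proof.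
  intros Hhalf. unfold E_nu, exp_divdiff. rewrite wgm_exp, sqrt_exp_mul, !ln_exp. fold m.
  replace (m - x) with (nu * (y - x)) by (unfold m; ring).
  replace (y - m) with ((1 - nu) * (y - x)) by (unfold m; ring).
  replace ((x + y) / 2 - m) with ((1 - 2 * nu) / 2 * (y - x)) by (unfold m; field).
  field. repeat split; lra.
Qed.

Lemma L_nu_sub_wgm_bounds_exp : nu < 1 / 2 ->
  let w := wgm nu (exp x) (exp y) in
  nu * E_nu nu (exp x) (exp y) <= L_nu nu (exp x) (exp y) - w /\
  L_nu nu (exp x) (exp y) - w <= (1 - nu) * E_nu nu (exp x) (exp y).
Proof.
  intros Hhalf w. unfold w. rewrite L_nu_exp, E_nu_exp, wgm_exp by lra. fold m.
  set (h := (x + y) / 2).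
  assert (Hxm : x <> m) by (unfold m; intro; apply Hxy; nra).
  assert (Hmh : m <> h) by (unfold m, h; intro; apply Hxy; nra).
  split.
  - pose proof (exp_mid_le_divdiff x m Hxm).
    pose proof (exp_mid_le_divdiff m h Hmh).
    pose proof (exp_convex (1 - 2 * nu) ((x + m) / 2) ((m + h) / 2) ltac:(lra)) as Hcv.
    replace ((1 - 2 * nu) * ((x + m) / 2) + (1 - (1 - 2 * nu)) * ((m + h) / 2)) with m
      in Hcv by (unfold m, h; field).
    nra.
  - set (c := (1 - 2 * nu) / (2 * (1 - nu))).
    assert (Hc : 0 < c < 1).
    { unfold c. split; [apply Rdiv_lt_0_compat; lra |].
      apply Rmult_lt_reg_r with (2 * (1 - nu)); [lra |]. field_simplify; lra. }
    pose proof (exp_divdiff_chord c m (y - m) Hc ltac:(unfold m; intro; apply Hxy; nra))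
      as Hchord.
    replace (m + (y - m)) with y in Hchord by ring.
    replace (m + c * (y - m)) with h in Hchord by (unfold m, h, c; field; lra).
    apply Rmult_le_compat_l with (r := 2 * (1 - nu)) in Hchord; [| lra].
    replace (2 * (1 - nu) * (c * exp_divdiff m y + (1 - c) * exp m))
      with ((1 - 2 * nu) * exp_divdiff m y + exp m) in Hchord by (unfold c; field; lra).
    lra.
Qed.

End MeansOfExp.

Lemma wgm_swap (nu a b : R) : wgm (1 - nu) b a = wgm nu a b.
Proof. unfold wgm. replace (1 - (1 - nu)) with nu by ring. apply Rmult_comm. Qed.

Lemma L_nu_swap (nu a b : R) : L_nu (1 - nu) b a = L_nu nu a b.
Proof.
  unfold L_nu. rewrite wgm_swap. replace (1 - (1 - nu)) with nu by ring.
  replace (ln b - ln a) with (- (ln a - ln b)) by ring. rewrite Rinv_opp. ring.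
Qed.

Lemma E_nu_swap (nu a b : R) : E_nu (1 - nu) b a = E_nu nu a b.
Proof.
  unfold E_nu. rewrite wgm_swap, (Rmult_comm b a). replace (1 - (1 - nu)) with nu by ring.
  replace (ln a - ln b) with (- (ln b - ln a)) by ring.
  replace (1 - 2 * (1 - nu)) with (- (1 - 2 * nu)) by ring.
  rewrite !Rinv_opp. unfold Rdiv. rewrite Rinv_opp. ring.
Qed.

Lemma L_nu_sub_wgm_bounds (a b nu : R) : 0 < a -> 0 < b -> a <> b -> 0 < nu < 1 / 2 ->
  nu * E_nu nu a b <= L_nu nu a b - wgm nu a b /\
  L_nu nu a b - wgm nu a b <= (1 - nu) * E_nu nu a b.
Proof.
  intros Ha Hb Hab Hnu.
  rewrite <- (exp_ln a Ha), <- (exp_ln b Hb).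
  apply L_nu_sub_wgm_bounds_exp; try lra.
  intro Hln. apply Hab. rewrite <- (exp_ln a Ha), <- (exp_ln b Hb), Hln. reflexivity.
Qed.

Theorem corollary2p13 (a b nu : R) :
  0 < a -> 0 < b -> a <> b -> 0 < nu < 1 -> nu <> 1 / 2 ->
  Rmin nu (1 - nu) * E_nu nu a b <= L_nu nu a b - wgm nu a b /\
  L_nu nu a b - wgm nu a b <= Rmax nu (1 - nu) * E_nu nu a b.
Proof.
  intros Ha Hb Hab Hnu Hhalf.
  destruct (Rlt_or_le nu (1 / 2)) as [Hlt | Hge].
  - rewrite Rmin_left, Rmax_right by lra.
    apply L_nu_sub_wgm_bounds; auto; lra.
  - rewrite Rmin_right, Rmax_left by lra.
    rewrite <- L_nu_swap, <- E_nu_swap, <- wgm_swap.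
    pose proof (L_nu_sub_wgm_bounds b a (1 - nu) Hb Ha (not_eq_sym Hab) ltac:(lra)) as Hb1.
    replace (1 - (1 - nu)) with nu in Hb1 by ring.
    exact Hb1.
Qed.
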